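(* Let $C'$, $S$ and $\widehat C$ be as in the context, and let $C$ be a column whose entries are a rearrangement of the elements of $S$ such that the two-column configuration $(C,C')$ is HHL. If there exist two distinct pivot entries $x,y$ of $\widehat C$ such that the transposition of $x$ and $y$ is legal with respect to $(C,C')$, then $(\widehat C,C')$ does not satisfy the Non-overlapping Condition.
   Context: A column is a finite sequence of entries listed top to bottom. $C'=(C'(1),\ldots,C'(c'))$ is a sequence of distinct positive integers and $S$ is a set of $c$ positive integers, $c\in\{c',c'+1\}$, such that with $s_1<\cdots<s_c$ the elements of $S$ and $t_1<\cdots<t_{c'}$ the entries of $C'$ sorted, $s_r\le t_r$ for $r\le c'$. The column $\widehat C$ of length $c$ is built as follows: every $x\in S\cap C'$ is placed in the row where $x$ occurs in $C'$; if $c=c'+1$, the largest element of $S\setminus C'$ is placed in row $c$; the remaining elements of $S\setminus C'$, in decreasing order, are placed in the rows occupied in $C'$ by the elements of $C'\setminus S$, in decreasing order (the $k$-th largest next to the $k$-th largest). A two-column configuration $(C,C')$ (left column $C$ of length $c$, right column $C'$) is HHL if the entries of each column are distinct, $C(j)\ne C'(r)$ whenever $r<j$, and $C(r)\le C'(r)$ for all $r\le c'$. A transposition of two entries $x,y$ of $C$ is legal with respect to $(C,C')$ if the column obtained from $C$ by swapping the positions of $x$ and $y$ forms, together with $C'$, an HHL configuration. Pivots: row $r$ is a pivot row of $(\widehat C,C')$ if either $r\le c'$ and $\widehat C(r)<C'(r)$, or $r=c'+1\le c$. If $q_1,\ldots,q_p$ are the pivot rows, the pivot entries of $\widehat C$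 are $b_j=\widehat C(q_j)$; set $d_j=C'(q_j)$ if $q_j\le c'$ and $d_j=\infty$ otherwise. $(\widehat C,C')$ satisfies the Non-overlapping Condition if $p\le1$, or if the intervals $[b_j,d_j]$ (meaning $[b_j,\infty)$ when $d_j=\infty$) are pairwise disjoint for $j\ne k$ in $[p]$. *)

(* Columns are sequences of natural numbers, read top to
   bottom; row r of the paper (1-based) is index r-1 here (0-based). *)
From mathcomp Require Import all_boot all_order.
Set Implicit Arguments. Unset Strict Implicit. Unset Printing Implicit Defensive.

Definition column := seq nat.

Definition admissible (C' : column) (S : seq nat) : Prop :=
  [/\ uniq C' && all (fun x => 0 < x) C', uniq S && all (fun x => 0 < x) S,
      (size S == size C') || (size S == (size C').+1) &
      forall r, r < size C' ->
        nth 0 (sort leq S) r <= nth 0 (sort leq C') r].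

Definition SmC' (S : seq nat) (C' : column) : seq nat :=
  sort geq [seq x <- S | x \notin C'].

Definition C'mS (S : seq nat) (C' : column) : seq nat :=
  sort geq [seq x <- C' | x \notin S].

(* The elements of S \ C' distributed into the rows of C' \ S: all of them
   if c = c', all but the largest if c = c' + 1. *)
Definition redistributed (S : seq nat) (C' : column) : seq nat :=
  if size S == (size C').+1 then behead (SmC' S C') else SmC' S C'.

Definition Chat (C' : column) (S : seq nat) : column :=
  [seq (if x \in S then x
        else nth 0 (redistributed S C') (index x (C'mS S C'))) | x <- C']
  ++ (if size S == (size C').+1 then [:: head 0 (SmC' S C')] else [::]).

Definition HHL (C C' : column) : Prop :=
  [/\ uniq C, uniq C',
      (forall j r, j < size C -> r < size C' -> r < j ->
         nth 0 C j != nth 0 C' r) &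
      (forall r, r < size C' -> r < size C /\ nth 0 C r <= nth 0 C' r)].

Definition swap_entries (C : column) (x y : nat) : column :=
  [seq (if z == x then y else if z == y then x else z) | z <- C].

Definition legal_transposition (C C' : column) (x y : nat) : Prop :=
  [/\ x \in C, y \in C & HHL (swap_entries C x y) C'].

Definition pivot_row (Ch C' : column) (r : nat) : bool :=
  ((r < size C') && (nth 0 Ch r < nth 0 C' r)) ||
  ((r == size C') && (size C' < size Ch)).

(* The interval [b_j, d_j] attached to pivot row q (d_j = infinity if q = c'). *)
Definition pivot_interval (Ch C' : column) (q : nat) (z : nat) : bool :=
  (nth 0 Ch q <= z) && ((size C' <= q) || (z <= nth 0 C' q)).

Definition non_overlapping (Ch C' : column) : Prop :=
  count (pivot_row Ch C') (iota 0 (size Ch)) <= 1 \/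
  (forall q1 q2, pivot_row Ch C' q1 -> pivot_row Ch C' q2 -> q1 != q2 ->
     forall z, ~~ (pivot_interval Ch C' q1 z && pivot_interval Ch C' q2 z)).

(* Let x < y be the two pivot entries (the statement is symmetric in them); we
   count the entries below y in two ways.  The legal transposition moves y into
   the row r of x, so C'(r) >= y; thus the rows r with C'(r) < y carry distinct
   entries C(r) <= C'(r) < y of C, all different from x, hence
   #{z in S | z < y} > #{z in C' | z < y}.  On the other hand, if the pivot intervals
   were disjoint, every row of C' \ S with entry above y receives in \widehat C
   an entry >= y, since otherwise it would be a pivot row whose interval contains
   y; the element of S \ C' left out of the redistribution is its maximum, which
   is >= y.  So S \ C' has at most as many entries below y as C' \ S, which
   gives #{z in S | z < y} <= #{z in C' | z < y}. *)

From mathcomp Require Import all_boot all_order zify.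

Set Implicit Arguments. Unset Strict Implicit. Unset Printing Implicit Defensive.

Lemma count_le_nth (T1 T2 : Type) (x1 : T1) (x2 : T2) (a1 : pred T1) (a2 : pred T2)
    (s1 : seq T1) (s2 : seq T2) :
  size s1 <= size s2 ->
  (forall k, k < size s1 -> a1 (nth x1 s1 k) -> a2 (nth x2 s2 k)) ->
  count a1 s1 <= count a2 s2.
Proof.
elim: s1 s2 => [|z1 s1 IH] [|z2 s2] //= size_le a12.
apply: leq_add; last by apply: IH => // k; apply: (a12 k.+1).
by case: (a1 z1) (a12 0) => // ->.
Qed.

Lemma count_filter_notin (T : eqType) (a : pred T) (s t : seq T) :
  uniq s -> uniq t ->
  count a s + count a [seq z <- t | z \notin s] =
  count a t + count a [seq z <- s | z \notin t].
Proof.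
move=> uniq_s uniq_t.
have split (u v : seq T) : count a u = count a [seq z <- u | z \in v] + count a [seq z <- u | z \notin v].
  by rewrite -count_cat (permP (permEl (perm_filterC (mem v) u))).
have common : perm_eq [seq z <- s | z \in t] [seq z <- t | z \in s].
  by apply: uniq_perm; rewrite ?filter_uniq // => z; rewrite !mem_filter andbC.
by rewrite (split s t) (split t s) (permP common) addnAC.
Qed.

Lemma count_ltn_behead (s : seq nat) y :
  sorted geq s -> y \in s -> count (gtn y) (behead s) = count (gtn y) s.
Proof.
case: s => [|x s] //= sorted_s; rewrite inE => /predU1P[-> | y_s]; first by rewrite ltnn.
have /allP/(_ y y_s) y_le_x := order_path_min (rev_trans leq_trans) sorted_s.
by rewrite ltnNge y_le_x.
Qed.

Lemma swap_entriesC (C : column) x y : swap_entries C x y = swap_entries C y x.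
Proof. by apply: eq_map => z; do 2!case: eqP => //; move=> -> ->. Qed.

Lemma legal_transpositionC (C C' : column) x y :
  legal_transposition C C' x y -> legal_transposition C C' y x.
Proof. by case=> x_C y_C; rewrite swap_entriesC. Qed.

Lemma HHL_size (C C' : column) : HHL C C' -> size C' <= size C.
Proof. by case=> _ _ _; case: (size C') => // n /(_ n (ltnSn n)) []. Qed.

Lemma count_ltn_legal_swap (C C' : column) x y :
  HHL C C' -> HHL (swap_entries C x y) C' -> x \in C -> x < y ->
  count (gtn y) C' < count (gtn y) C.
Proof.
move=> HHL_C HHL_swap x_C x_lt_y.
have [uniq_C _ _ C_le] := HHL_C; have [_ _ _ swap_le] := HHL_swap.
have count_x : count (gtn y) C = (count (predI (gtn y) (predC1 x)) C).+1.
  have := count_predUI (predI (gtn y) (predC1 x)) (pred1 x) C.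
  rewrite count_uniq_mem // x_C addn1 => <-.
  rewrite (@eq_count _ (predI (predI _ _) (pred1 x)) pred0) ?count_pred0 ?addn0;
    last by move=> z /=; case: eqP; rewrite ?andbF.
  by apply: eq_count => z /=; case: eqP => [-> | _]; rewrite ?x_lt_y ?andbT ?orbF.
rewrite count_x ltnS; apply: (count_le_nth (x1 := 0) (x2 := 0) (HHL_size HHL_C)) => k k_lt /= C'k_lt_y.
have [k_lt_C Ck_le] := C_le k k_lt; have := swap_le k k_lt.
rewrite /swap_entries (nth_map 0) // => -[_].
case: eqP => [_ | /eqP Ck_neq_x _]; first by rewrite leqNgt C'k_lt_y.
by rewrite (leq_ltn_trans Ck_le C'k_lt_y).
Qed.

Definition pivot_intervals_disjoint (Ch C' : column) : Prop :=
  forall q1 q2, pivot_row Ch C' q1 -> pivot_row Ch C' q2 -> q1 != q2 ->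
    forall z, ~~ (pivot_interval Ch C' q1 z && pivot_interval Ch C' q2 z).

Section Chat.

Variables C' S : seq nat.
Hypotheses (uniq_C' : uniq C') (uniq_S : uniq S).
Hypothesis size_S : (size S == size C') || (size S == (size C').+1).

Local Notation Ch := (Chat C' S).
Local Notation L := (SmC' S C').
Local Notation M := (C'mS S C').
Local Notation red := (redistributed S C').
Local Notation extra_row := (size S == (size C').+1).

Lemma mem_SmC' z : (z \in L) = (z \in S) && (z \notin C').
Proof. by rewrite mem_sort mem_filter andbC. Qed.

Lemma mem_C'mS z : (z \in M) = (z \in C') && (z \notin S).
Proof. by rewrite mem_sort mem_filter andbC. Qed.

Lemma uniq_C'mS : uniq M.
Proof. by rewrite sort_uniq filter_uniq. Qed.

Lemma size_SmC' : size L = size M + extra_row.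
Proof.
have := count_filter_notin predT uniq_S uniq_C'.
rewrite /SmC' /C'mS !size_sort !count_predT.
case/orP: size_S => /eqP ->; rewrite ?eqxx ?(ltn_eqF (ltnSn _)) /=; lia.
Qed.


Lemma size_redistributed : size red = size M.
Proof.
rewrite /redistributed.
by case: ifP => extra; rewrite ?size_behead size_SmC' extra /= ?addn1 ?addn0.
Qed.

Lemma size_Chat : size Ch = size C' + extra_row.
Proof. by rewrite /Chat size_cat size_map; case: extra_row. Qed.

Lemma nth_Chat r : r < size C' ->
  nth 0 Ch r = if nth 0 C' r \in S then nth 0 C' r
               else nth 0 red (index (nth 0 C' r) M).
Proof. by move=> r_lt; rewrite /Chat nth_cat size_map r_lt (nth_map 0). Qed.

Lemma nth_Chat_extra_row : extra_row -> nth 0 Ch (size C') = head 0 L.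
Proof. by rewrite /Chat => ->; rewrite nth_cat size_map ltnn subnn. Qed.

Lemma pivot_row_Chat_lt_size q : pivot_row Ch C' q -> q < size Ch.
Proof.
case/orP => [/andP[q_lt _] | /andP[/eqP -> //]].
by rewrite size_Chat (leq_trans q_lt (leq_addr _ _)).
Qed.

Lemma pivot_entry_SmC' q : pivot_row Ch C' q -> nth 0 Ch q \in L.
Proof.
case/orP => [/andP[q_lt] | /andP[/eqP -> extra]].
  rewrite nth_Chat //; case: ifP => [_ | notin_S _]; first by rewrite ltnn.
  have: nth 0 red (index (nth 0 C' q) M) \in red.
    by rewrite mem_nth // size_redistributed index_mem mem_C'mS mem_nth ?notin_S.
  by rewrite /redistributed; case: ifP => // _; apply: mem_behead.
have {}extra : extra_row by move: extra; rewrite size_Chat; case: extra_row; rewrite ?addn0 ?ltnn.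
rewrite nth_Chat_extra_row //.
by case: L (size_SmC') => [|z s]; rewrite ?mem_head // extra addn1.
Qed.

Lemma count_ltn_redistributed y : y \in L -> count (gtn y) red = count (gtn y) L.
Proof.
move=> y_L; rewrite /redistributed; case: ifP => // _.
by apply: count_ltn_behead y_L; apply: sort_sorted => m n; apply: leq_total.
Qed.


Section Disjoint.

Hypothesis disjoint : pivot_intervals_disjoint Ch C'.

Lemma redistributed_ltn_pivot_entry q k :
  pivot_row Ch C' q -> k < size M ->
  nth 0 red k < nth 0 Ch q -> nth 0 M k < nth 0 Ch q.
Proof.
move=> pivot_q k_lt red_lt.
have: nth 0 Ch q \in L := pivot_entry_SmC' pivot_q.
rewrite mem_SmC' => /andP[y_S _].
have w_M : nth 0 M k \in M := mem_nth 0 k_lt.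
have y_neq_w : nth 0 Ch q != nth 0 M k.
  by apply: contraTneq w_M => <-; rewrite mem_C'mS y_S andbF.
rewrite ltnNge leq_eqVlt negb_or y_neq_w /=; apply/negP => y_lt_w.
move: w_M; rewrite mem_C'mS => /andP[w_C' w_notin_S].
pose r := index (nth 0 M k) C'.
have r_lt : r < size C' by rewrite index_mem.
have C'r : nth 0 C' r = nth 0 M k by rewrite nth_index.
have Chr : nth 0 Ch r = nth 0 red k.
  by rewrite nth_Chat // C'r (negbTE w_notin_S) index_uniq // uniq_C'mS.
have pivot_r : pivot_row Ch C' r by rewrite /pivot_row r_lt Chr C'r (ltn_trans red_lt y_lt_w).
have r_neq_q : r != q by apply: contraTneq red_lt => <-; rewrite Chr ltnn.
apply: (negP (disjoint pivot_r pivot_q r_neq_q (nth 0 Ch q))).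
rewrite /pivot_interval Chr C'r (ltnW red_lt) (ltnW y_lt_w) orbT leqnn /=.
by case/orP: pivot_q => /andP[] => [_ /ltnW -> | /eqP -> _]; rewrite ?orbT ?leqnn.
Qed.

Lemma count_ltn_pivot_entry q : pivot_row Ch C' q ->
  count (gtn (nth 0 Ch q)) S <= count (gtn (nth 0 Ch q)) C'.
Proof.
move=> pivot_q; set y := nth 0 Ch q.
have y_L : y \in L := pivot_entry_SmC' pivot_q.
rewrite -(leq_add2r (count (gtn y) [seq z <- C' | z \notin S])) count_filter_notin //.
rewrite leq_add2l -[count _ [seq z <- S | _]](count_sort geq).
rewrite -[count _ [seq z <- C' | _]](count_sort geq) -(count_ltn_redistributed y_L).
apply: (count_le_nth (x1 := 0) (x2 := 0)) => [|k]; rewrite size_redistributed //.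
by move=> k_lt; apply: redistributed_ltn_pivot_entry.
Qed.

End Disjoint.

End Chat.

Theorem lemma4p1 (C' S C : seq nat) :
  admissible C' S ->
  perm_eq C S ->
  HHL C C' ->
  (exists q1 q2,
     [/\ pivot_row (Chat C' S) C' q1, pivot_row (Chat C' S) C' q2,
         nth 0 (Chat C' S) q1 != nth 0 (Chat C' S) q2 &
         legal_transposition C C' (nth 0 (Chat C' S) q1) (nth 0 (Chat C' S) q2)]) ->
  ~ non_overlapping (Chat C' S) C'.
Proof.
case=> /andP[uniq_C' _] /andP[uniq_S _] size_S _ perm_CS HHL_C.
case=> q1 [q2 [pivot1 pivot2 entries_neq legal]] [at_most_one_pivot | disjoint].
  have q_neq : q1 != q2 by apply: contraNneq entries_neq => ->.
  have: 2 <= size [seq q <- iota 0 (size (Chat C' S)) | pivot_row (Chat C' S) C' q].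
    apply: (uniq_leq_size (s1 := [:: q1; q2])); first by rewrite /= inE q_neq.
    move=> q; rewrite !inE mem_filter mem_iota /= => /orP[] /eqP ->;
      by rewrite ?pivot1 ?pivot2 pivot_row_Chat_lt_size.
  by rewrite size_filter leqNgt ltnS at_most_one_pivot.
wlog lt_entries : q1 q2 pivot1 pivot2 entries_neq legal /
    nth 0 (Chat C' S) q1 < nth 0 (Chat C' S) q2.
  move=> wlog_lt; case: (ltngtP (nth 0 (Chat C' S) q1) (nth 0 (Chat C' S) q2)).
  - exact: wlog_lt.
  - by apply: (wlog_lt q2 q1); rewrite 1?eq_sym //; apply: legal_transpositionC.
  - by move/eqP: entries_neq.
have [x_C _ HHL_swap] := legal.
have := count_ltn_legal_swap HHL_C HHL_swap x_C lt_entries.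
by rewrite (permP perm_CS) ltnNge count_ltn_pivot_entry.
Qed.
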